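(* Fix an irrational $\alpha\in(0,1)$. (i) Let $w\in W_\alpha$. If $|w|<|s_n|$ for some $n\in\mathbb{N}$ with $n\ge2$, then $w$ is a subword of $s_{n+2}$. (ii) Let $w\in W_\alpha$ be a subword of $s_n$ for some $n\in\mathbb{N}$. Then there exist words $x,y\in W_\alpha$ with $xwy=s_{n+3}$ and $|x|,|y|\ge|s_{n+1}|$.
   Context: Let $\alpha=[a_1,a_2,\dots]$ be the continued fraction expansion of $\alpha$. Define words over $\{0,1\}$ by $s_{-1}=1$, $s_0=0$, $s_1=s_0^{a_1-1}s_{-1}$, $s_n=s_{n-1}^{a_n}s_{n-2}$ for $n\ge2$. For $\theta\in[0,1)$, $v_{\alpha,\theta}$ is the two-sided infinite word with letters $v_{\alpha,\theta}(n)=\chi_{[1-\alpha,1)}(n\alpha+\theta\bmod1)$, $n\in\mathbb{Z}$; $W_\alpha$ is the set of all finite non-empty subwords of the words $v_{\alpha,\theta}$, $\theta\in[0,1)$. $|w|$ denotes the length of a word $w$. $\mathbb{N}=\{1,2,\dots\}$. *)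

(* concrete reals R, words as lists of bool (false = 0, true = 1). *)
From Stdlib Require Import Reals ZArith List.
Import ListNotations.
Open Scope R_scope.

Definition irrational (x : R) : Prop :=
  ~ exists (p q : Z), q <> 0%Z /\ x = IZR p / IZR q.

(* Continued fraction expansion alpha = [a_1, a_2, ...] of alpha in (0,1),
   via the Gauss map: cf_rem 0 = alpha, cf_rem (k+1) = frac (1 / cf_rem k),
   and a_(k+1) = floor (1 / cf_rem k). *)
Fixpoint cf_rem (alpha : R) (k : nat) : R :=
  match k with
  | O => alpha
  | S k' => frac_part (/ cf_rem alpha k')
  end.

(* pq alpha k = a_k for k >= 1 (pq alpha 0 is a meaningless default). *)
Definition pq (alpha : R) (k : nat) : nat :=
  match k with
  | O => O
  | S k' => Z.to_nat (Int_part (/ cf_rem alpha k'))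
  end.

Definition wpow (u : list bool) (m : nat) : list bool := concat (repeat u m).

(* sp alpha n = (s_{n-1}, s_n) *)
Fixpoint sp (alpha : R) (n : nat) : list bool * list bool :=
  match n with
  | O => ([true], [false])
  | S k =>
      let (p, c) := sp alpha k in
      match k with
      | O => (c, wpow c (pq alpha 1 - 1) ++ p)
      | _ => (c, wpow c (pq alpha (S k)) ++ p)
      end
  end.

Definition s (alpha : R) (n : nat) : list bool := snd (sp alpha n).

Definition v (alpha theta : R) (n : Z) : bool :=
  if Rle_dec (1 - alpha) (frac_part (IZR n * alpha + theta)) then true else false.

Definition inW (alpha : R) (w : list bool) : Prop :=
  w <> [] /\
  exists theta : R, 0 <= theta < 1 /\
  exists k : Z, forall i : nat, (i < length w)%nat ->
    nth i w false = v alpha theta (k + Z.of_nat i)%Z.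

Definition subword (u t : list bool) : Prop :=
  exists x y : list bool, x ++ u ++ y = t.

From Stdlib Require Import Reals ZArith List Lia Lra.
Import ListNotations.
Open Scope R_scope.

(* v_{α,θ} is the coding of the rotation x ↦ x + α of [0,1) by the partition
   [0,1-α) ↦ 0, [1-α,1) ↦ 1.  Inducing a rotation by b on [0,1-b) (resp. on [1-b,1))
   gives, after rescaling, a rotation whose coding is mapped onto the old one by the
   substitution 0 ↦ 0, 1 ↦ 01 (resp. 0 ↦ 10, 1 ↦ 1); such a step lowers 1/b (resp.
   1/(1-b)) by one.  Following the continued fraction, a_k - 1 steps of one kind and
   one of the other lead from level k-1 to level k, where the composed substitution
   sends the two letters to s_k and s_k s_{k-1}.  So every factor of an α-coding is
   read, starting inside the first block, in a concatenation of blocks s_n and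
   s_n s_{n-1}, each of which begins with s_n.  A factor shorter than s_n therefore
   lies in s_n s_n or in s_n s_{n-1} s_n; since s_n s_{n-1} and s_{n-1} s_n differ only
   in their last two letters, it lies in s_n s_{n-1} s_n, a suffix of s_{n+2}.
   Part (ii) is read off from s_{n+3} = s_{n+1}^{a_{n+2}} s_n s_{n+2}^{a_{n+3}-1} s_{n+1}. *)

Definition code (b x : R) : bool := if Rle_dec (1 - b) x then true else false.
Definition rot (b x : R) : R := if Rlt_dec (x + b) 1 then x + b else x + b - 1.

Fixpoint rot_iter (b x : R) (n : nat) : R :=
  match n with O => x | S n' => rot_iter b (rot b x) n' end.

Fixpoint coding (b x : R) (n : nat) : list bool :=
  match n with O => [] | S n' => code b x :: coding b (rot b x) n' end.

(* A substitution on {0,1} is the pair (image of 0, image of 1). *)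
Definition img (σ : list bool * list bool) (c : bool) : list bool :=
  if c then snd σ else fst σ.
Definition subst (σ : list bool * list bool) (l : list bool) : list bool :=
  concat (map (img σ) l).
Definition subst_comp (σ τ : list bool * list bool) : list bool * list bool :=
  (subst σ (fst τ), subst σ (snd τ)).

Lemma subst_app σ l1 l2 : subst σ (l1 ++ l2) = subst σ l1 ++ subst σ l2.
Proof. unfold subst. rewrite map_app, concat_app. reflexivity. Qed.

Lemma subst_cons σ c l : subst σ (c :: l) = img σ c ++ subst σ l.
Proof. reflexivity. Qed.

Lemma subst_subst σ τ l : subst σ (subst τ l) = subst (subst_comp σ τ) l.
Proof.
  induction l as [|c l IH]; [reflexivity|].
  rewrite !subst_cons, subst_app, IH. destruct c; reflexivity.
Qed.

Lemma img_subst_comp σ τ c : img (subst_comp σ τ) c = subst σ (img τ c).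
Proof. destruct c; reflexivity. Qed.

Lemma subst_id l : subst ([false], [true]) l = l.
Proof.
  induction l as [|c l IH]; [reflexivity|].
  rewrite subst_cons, IH. destruct c; reflexivity.
Qed.

Lemma subst_length_ge σ l : (forall c, 1 <= length (img σ c))%nat ->
  (length l <= length (subst σ l))%nat.
Proof.
  intros Hσ. induction l as [|c l IH]; [simpl; lia|].
  rewrite subst_cons, length_app. specialize (Hσ c). simpl. lia.
Qed.

Lemma wpow_S u j : wpow u (S j) = u ++ wpow u j.
Proof. reflexivity. Qed.

Lemma wpow_Sr u j : wpow u (S j) = wpow u j ++ u.
Proof.
  induction j as [|j IH].
  - unfold wpow; simpl. rewrite !app_nil_r. reflexivity.
  - rewrite (wpow_S u (S j)), IH, app_assoc, <- wpow_S, IH. reflexivity.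
Qed.

Lemma firstn_app_le {A} (l1 l2 : list A) e :
  (e <= length l1)%nat -> firstn e (l1 ++ l2) = firstn e l1.
Proof.
  intros He. rewrite firstn_app. replace (e - length l1)%nat with 0%nat by lia.
  apply app_nil_r.
Qed.

Lemma subword_trans u v w : subword u v -> subword v w -> subword u w.
Proof.
  intros [a [b <-]] [c [d <-]]. exists (c ++ a), (b ++ d).
  rewrite <- !app_assoc. reflexivity.
Qed.

Lemma subword_of_app_prefix (u L r A B : list bool) :
  A ++ u ++ B = L ++ r -> (length A + length u <= length L)%nat -> subword u L.
Proof.
  intros H Hl.
  assert (HL : firstn (length L) (A ++ u ++ B) = L)
    by (rewrite H, firstn_app, firstn_all, Nat.sub_diag, app_nil_r; reflexivity).
  replace (length L) with (length A + (length u + (length L - length A - length u)))%nat in HL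
    by lia.
  rewrite !firstn_app_2 in HL.
  exists A, (firstn (length L - length A - length u) B). exact HL.
Qed.

Lemma subword_of_common_prefix (w r L Y : list bool) d k :
  w ++ r = skipn d L -> (d + length w <= k)%nat -> firstn k L = firstn k Y -> subword w Y.
Proof.
  intros Hw Hk HLY.
  assert (Ew : w = skipn d (firstn (d + length w) Y)).
  { replace (firstn (d + length w) Y) with (firstn (d + length w) (firstn k L))
      by (rewrite HLY, firstn_firstn; f_equal; lia).
    rewrite firstn_firstn, Nat.min_l by lia.
    rewrite <- firstn_skipn_comm, <- Hw, firstn_app, Nat.sub_diag, app_nil_r.
    symmetry. apply firstn_all. }
  exists (firstn d (firstn (d + length w) Y)), (skipn (d + length w) Y).
  rewrite Ew at 2. rewrite app_assoc, !firstn_skipn. reflexivity.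
Qed.
Lemma coding_length b x n : length (coding b x n) = n.
Proof. revert x; induction n; intros; simpl; auto. Qed.

Lemma coding_app b x n m : coding b x (n + m) = coding b x n ++ coding b (rot_iter b x n) m.
Proof. revert x; induction n; intros; simpl; auto. rewrite IHn. reflexivity. Qed.

Lemma nth_coding b x n i : (i < n)%nat -> nth i (coding b x n) false = code b (rot_iter b x i).
Proof.
  revert x i; induction n; intros x i Hi; [lia|].
  destruct i; simpl; auto. apply IHn. lia.
Qed.

Lemma rot_range b x : 0 < b < 1 -> 0 <= x < 1 -> 0 <= rot b x < 1.
Proof. intros. unfold rot. destruct Rlt_dec; lra. Qed.

Lemma frac_part_eq r z : 0 <= r - IZR z < 1 -> frac_part r = r - IZR z.
Proof.
  intros H. unfold frac_part, Int_part.
  replace (up r) with (z + 1)%Z by (apply tech_up; rewrite plus_IZR; simpl; lra).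
  replace (z + 1 - 1)%Z with z by lia. reflexivity.
Qed.

Lemma frac_part_add_rot a r : 0 < a < 1 -> frac_part (r + a) = rot a (frac_part r).
Proof.
  intros Ha. unfold rot. pose proof (base_fp r) as [H1 H2].
  change (frac_part r) with (r - IZR (Int_part r)) in *.
  destruct (Rlt_dec _ 1).
  - rewrite (frac_part_eq _ (Int_part r)); lra.
  - rewrite (frac_part_eq _ (Int_part r + 1)); rewrite ?plus_IZR; simpl; lra.
Qed.

Lemma v_code_rot_iter a θ k i : 0 < a < 1 ->
  v a θ (k + Z.of_nat i)%Z = code a (rot_iter a (frac_part (IZR k * a + θ)) i).
Proof.
  intros Ha.
  assert (Horbit : forall r, rot_iter a (frac_part r) i = frac_part (r + INR i * a)).
  { induction i as [|i IH]; intros r; simpl.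
    - f_equal. lra.
    - rewrite <- frac_part_add_rot, IH by exact Ha. f_equal. destruct i; simpl; lra. }
  rewrite Horbit. unfold v, code.
  rewrite plus_IZR, <- INR_IZR_INZ.
  replace ((IZR k + INR i) * a + θ) with (IZR k * a + θ + INR i * a) by ring.
  reflexivity.
Qed.

Lemma inW_coding a w : 0 < a < 1 -> inW a w -> exists x, 0 <= x < 1 /\ w = coding a x (length w).
Proof.
  intros Ha [_ [θ [_ [k Hk]]]].
  exists (frac_part (IZR k * a + θ)). split.
  - pose proof (base_fp (IZR k * a + θ)). lra.
  - apply nth_ext with (d := false) (d' := false); [rewrite coding_length; auto|].
    intros i Hi. rewrite nth_coding, Hk by auto. apply v_code_rot_iter; auto.
Qed.

Lemma inW_subword_coding0 a u N : 0 < a < 1 -> u <> [] -> subword u (coding a 0 N) -> inW a u.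
Proof.
  intros Ha Hne [A [B H]]. split; [exact Hne|]. exists 0. split; [lra|].
  exists (Z.of_nat (length A)). intros i Hi.
  assert (Hl : (length A + i < N)%nat)
    by (rewrite <- (coding_length a 0 N), <- H, !length_app; lia).
  replace 0 with (frac_part (IZR 0 * a + 0)) in H
    by (rewrite Rmult_0_l, Rplus_0_r, (frac_part_eq 0 0); simpl; lra).
  rewrite <- Nat2Z.inj_add, <- (Z.add_0_l (Z.of_nat _)), v_code_rot_iter,
    <- nth_coding with (n := N) by auto.
  rewrite <- H, app_nth2_plus, app_nth1 by exact Hi. reflexivity.
Qed.

Definition recodes (a b : R) (σ : list bool * list bool) : Prop :=
  forall x, 0 <= x < 1 -> forall N, exists y d M r, 0 <= y < 1 /\
    (d < length (img σ (code b y)))%nat /\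
    coding a x N ++ r = skipn d (subst σ (coding b y M)).

Lemma recodes_id a : recodes a a ([false], [true]).
Proof.
  intros y Hy N. exists y, 0%nat, N, []. split; [exact Hy|]. split.
  - destruct (code a y); simpl; lia.
  - rewrite app_nil_r, subst_id. reflexivity.
Qed.

Section InducedRotation.

Variables (b b' : R) (σ : list bool * list bool) (g : R -> R).
Hypothesis Hb' : 0 < b' < 1.
Hypothesis Hσ : forall c, (1 <= length (img σ c))%nat.
(* [g] conjugates the rotation by [b'] to the map induced by the rotation by [b] on the
   range of [g], the return time at [g z] being the length of [img σ (code b' z)];
   the resulting tower covers [0,1). *)
Hypothesis Hstep : forall z, 0 <= z < 1 ->
  let u := img σ (code b' z) in
  coding b (g z) (length u) = u /\ rot_iter b (g z) (length u) = g (rot b' z).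
Hypothesis Hcover : forall y, 0 <= y < 1 -> exists z i, 0 <= z < 1 /\
  (i < length (img σ (code b' z)))%nat /\ rot_iter b (g z) i = y.

Lemma coding_subst M z : 0 <= z < 1 ->
  coding b (g z) (length (subst σ (coding b' z M))) = subst σ (coding b' z M).
Proof.
  revert z; induction M as [|M IH]; intros z Hz; [reflexivity|].
  destruct (Hstep z Hz) as [Hu Hrot].
  simpl coding. rewrite subst_cons, length_app, coding_app, Hu, Hrot, IH
    by (apply rot_range; assumption).
  reflexivity.
Qed.

Lemma recodes_subst_comp a P : recodes a b P -> recodes a b' (subst_comp P σ).
Proof.
  intros HP x Hx N.
  destruct (HP x Hx N) as [y [d [M [r [Hy [Hd H]]]]]].
  destruct (Hcover y Hy) as [z [i [Hz [Hi Hzy]]]].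
  set (u := img σ (code b' z)) in Hi.
  assert (Hu : u = coding b (g z) i ++ code b y :: coding b (rot b y) (length u - i - 1)).
  { destruct (Hstep z Hz) as [Hu _]. fold u in Hu.
    rewrite <- Hu at 1. replace (length u) with (i + S (length u - i - 1))%nat at 1 by lia.
    rewrite coding_app, Hzy. reflexivity. }
  set (V := subst σ (coding b' z (i + M))).
  assert (HV : (i + M <= length V)%nat)
    by (unfold V; rewrite <- (coding_length b' z (i + M)) at 1; apply subst_length_ge, Hσ).
  assert (EV : V = coding b (g z) i ++ coding b y M
                   ++ coding b (rot_iter b y M) (length V - i - M)).
  { unfold V at 1. rewrite <- coding_subst by exact Hz. fold V.
    replace (length V) with (i + (M + (length V - i - M)))%nat at 1 by lia.
    rewrite !coding_app, Hzy. reflexivity. }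
  exists z, (length (subst P (coding b (g z) i)) + d)%nat, (i + M)%nat. eexists.
  split; [exact Hz|]. split.
  - rewrite img_subst_comp. fold u. rewrite Hu, subst_app, subst_cons, !length_app. lia.
  - rewrite <- subst_subst. fold V.
    rewrite EV, !subst_app, skipn_app, skipn_all2, Nat.add_comm, Nat.add_sub by lia.
    rewrite skipn_app, <- H, <- app_assoc. reflexivity.
Qed.

End InducedRotation.

(* The substitutions of the inductions on [0, 1 - b) and on [1 - b, 1). *)
Definition sigmaL : list bool * list bool := ([false], [false; true]).
Definition sigmaR : list bool * list bool := ([true; false], [true]).

Ltac case_rot :=
  repeat (simpl; unfold code, rot;
    match goal with
    | |- context [Rle_dec ?x ?y] => destruct (Rle_dec x y)
    | |- context [Rlt_dec ?x ?y] => destruct (Rlt_dec x y)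
    end).

Lemma recodes_L a b b' P : 0 < b -> 2 * b < 1 -> b' * (1 - b) = b ->
  recodes a b P -> recodes a b' (subst_comp P sigmaL).
Proof.
  intros Hb Hb2 Hb'. apply (recodes_subst_comp b b' sigmaL (fun z => (1 - b) * z)).
  - nra.
  - destruct c; simpl; lia.
  - intros z Hz. unfold sigmaL, img. case_rot. all: try (exfalso; nra).
    all: split; [reflexivity | nra].
  - intros y Hy. destruct (Rle_dec (1 - b) y).
    + assert (Hz : (1 - b) * ((y - b) / (1 - b)) = y - b) by (field; lra).
      set (z := (y - b) / (1 - b)) in *. clearbody z.
      exists z, 1%nat. split; [nra|]. unfold sigmaL, img. case_rot; rewrite ?Hz in *.
      all: split; [simpl; lia || (exfalso; nra) | lra].
    + assert (Hz : (1 - b) * (y / (1 - b)) = y) by (field; lra).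
      set (z := y / (1 - b)) in *. clearbody z.
      exists z, 0%nat. split; [nra|]. unfold sigmaL, img. case_rot.
      all: split; [simpl; lia | lra].
Qed.

Lemma recodes_R a b b' P : 1 < 2 * b -> b < 1 -> b' * b = 2 * b - 1 ->
  recodes a b P -> recodes a b' (subst_comp P sigmaR).
Proof.
  intros Hb Hb1 Hb'. apply (recodes_subst_comp b b' sigmaR (fun z => 1 - b + b * z)).
  - nra.
  - destruct c; simpl; lia.
  - intros z Hz. unfold sigmaR, img. case_rot. all: try (exfalso; nra).
    all: split; [reflexivity | nra].
  - intros y Hy. destruct (Rle_dec (1 - b) y).
    + assert (Hz : b * ((y - (1 - b)) / b) = y - (1 - b)) by (field; lra).
      set (z := (y - (1 - b)) / b) in *. clearbody z.
      exists z, 0%nat. split; [nra|]. unfold sigmaR, img. case_rot.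
      all: split; [simpl; lia | lra].
    + assert (Hz : b * (y / b) = y) by (field; lra).
      set (z := y / b) in *. clearbody z.
      exists z, 1%nat. split; [nra|]. unfold sigmaR, img. case_rot; rewrite ?Hz in *.
      all: split; [simpl; lia || (exfalso; nra) | lra].
Qed.

Lemma subst_comp_sigmaL P : subst_comp P sigmaL = (fst P, fst P ++ snd P).
Proof. unfold subst_comp, subst; simpl. rewrite !app_nil_r. reflexivity. Qed.

Lemma subst_comp_sigmaR P : subst_comp P sigmaR = (snd P ++ fst P, snd P).
Proof. unfold subst_comp, subst; simpl. rewrite !app_nil_r. reflexivity. Qed.

Lemma recodes_L_iter a t P j : INR j + 1 < t ->
  recodes a (/ t) P -> recodes a (/ (t - INR j)) (fst P, wpow (fst P) j ++ snd P).
Proof.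
  intros Hj HP. induction j as [|j IH].
  - rewrite Rminus_0_r. destruct P. exact HP.
  - rewrite S_INR in *.
    replace (fst P, wpow (fst P) (S j) ++ snd P)
      with (subst_comp (fst P, wpow (fst P) j ++ snd P) sigmaL)
      by (rewrite subst_comp_sigmaL; simpl; rewrite wpow_S, app_assoc; reflexivity).
    apply (recodes_L a (/ (t - INR j))); [| | field; lra | apply IH; lra].
    + apply Rinv_0_lt_compat. lra.
    + apply (Rmult_lt_reg_r (t - INR j)); [lra|]. field_simplify; lra.
Qed.

Lemma recodes_R_iter a t P j : INR j + 1 < t ->
  recodes a (1 - / t) P -> recodes a (1 - / (t - INR j)) (wpow (snd P) j ++ fst P, snd P).
Proof.
  intros Hj HP. induction j as [|j IH].
  - rewrite Rminus_0_r. destruct P. exact HP.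
  - rewrite S_INR in *.
    replace (wpow (snd P) (S j) ++ fst P, snd P)
      with (subst_comp (wpow (snd P) j ++ fst P, snd P) sigmaR)
      by (rewrite subst_comp_sigmaR; simpl; rewrite wpow_S, app_assoc; reflexivity).
    apply (recodes_R a (1 - / (t - INR j))); [| | field; lra | apply IH; lra].
    + apply (Rmult_lt_reg_r (t - INR j)); [lra|]. field_simplify; lra.
    + assert (0 < / (t - INR j)) by (apply Rinv_0_lt_compat; lra). lra.
Qed.

Lemma recodes_L_then_R a g g' A P : 0 < g' < 1 -> / g = INR (S A) + g' ->
  recodes a g P ->
  recodes a (1 - g') (wpow (fst P) A ++ snd P ++ fst P, wpow (fst P) A ++ snd P).
Proof.
  intros Hg' Hinv HP.
  assert (HA : recodes a (/ (1 + g')) (fst P, wpow (fst P) A ++ snd P)).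
  { replace (1 + g') with (/ g - INR A) by (rewrite Hinv, S_INR; ring).
    apply recodes_L_iter; [rewrite Hinv, S_INR; lra|].
    rewrite Rinv_inv. exact HP. }
  replace (wpow (fst P) A ++ snd P ++ fst P, wpow (fst P) A ++ snd P)
    with (subst_comp (fst P, wpow (fst P) A ++ snd P) sigmaR)
    by (rewrite subst_comp_sigmaR; simpl; rewrite app_assoc; reflexivity).
  apply (recodes_R a (/ (1 + g'))); [| | field; lra | exact HA].
  - apply (Rmult_lt_reg_r (1 + g')); [lra|]. field_simplify; lra.
  - apply (Rmult_lt_reg_r (1 + g')); [lra|]. field_simplify; lra.
Qed.

Lemma recodes_R_then_L a g g' A P : 0 < g' < 1 -> / g = INR (S A) + g' ->
  recodes a (1 - g) P ->
  recodes a g' (wpow (snd P) A ++ fst P, wpow (snd P) A ++ fst P ++ snd P).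
Proof.
  intros Hg' Hinv HP.
  assert (HA : recodes a (1 - / (1 + g')) (wpow (snd P) A ++ fst P, snd P)).
  { replace (1 + g') with (/ g - INR A) by (rewrite Hinv, S_INR; ring).
    apply recodes_R_iter; [rewrite Hinv, S_INR; lra|].
    rewrite Rinv_inv. exact HP. }
  replace (wpow (snd P) A ++ fst P, wpow (snd P) A ++ fst P ++ snd P)
    with (subst_comp (wpow (snd P) A ++ fst P, snd P) sigmaL)
    by (rewrite subst_comp_sigmaL; simpl; rewrite app_assoc; reflexivity).
  apply (recodes_L a (1 - / (1 + g'))); [| | field; lra | exact HA].
  - apply (Rmult_lt_reg_r (1 + g')); [lra|]. field_simplify; lra.
  - apply (Rmult_lt_reg_r (1 + g')); [lra|]. field_simplify; lra.
Qed.

Lemma irrational_inv x : irrational x -> irrational (/ x).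
Proof.
  intros Hx [p [q [Hq E]]]. apply Hx.
  assert (Hp : p <> 0%Z).
  { intros ->. rewrite Rdiv_0_l in E. apply Hx. exists 0%Z, 1%Z.
    split; [lia|]. rewrite <- (Rinv_inv x), E, Rinv_0. field. }
  exists q, p. split; [exact Hp|].
  rewrite <- (Rinv_inv x), E. field. split; apply not_0_IZR; assumption.
Qed.

Lemma irrational_sub_IZR x z : irrational x -> irrational (x - IZR z).
Proof.
  intros Hx [p [q [Hq E]]]. apply Hx. exists (p + z * q)%Z, q. split; [exact Hq|].
  rewrite plus_IZR, mult_IZR. apply not_0_IZR in Hq.
  replace x with (x - IZR z + IZR z) by ring. rewrite E. field. exact Hq.
Qed.

Lemma frac_part_pos x : irrational x -> 0 < frac_part x.
Proof.
  intros Hx. destruct (base_fp x) as [[Hpos | Hzero] _]; [exact Hpos|].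
  exfalso. apply Hx. exists (Int_part x), 1%Z. split; [lia|].
  unfold frac_part in Hzero. lra.
Qed.

Lemma cf_rem_range a : 0 < a < 1 -> irrational a ->
  forall k, 0 < cf_rem a k < 1 /\ irrational (cf_rem a k).
Proof.
  intros Ha Hirr k. induction k as [|k [Hk Hirrk]]; [auto|]. simpl.
  pose proof (irrational_inv _ Hirrk) as Hinv.
  split; [split; [apply frac_part_pos, Hinv | apply base_fp]|].
  unfold frac_part. apply irrational_sub_IZR, Hinv.
Qed.

Lemma cf_rem_inv a : 0 < a < 1 -> irrational a -> forall k,
  (1 <= pq a (S k))%nat /\ / cf_rem a k = INR (pq a (S k)) + cf_rem a (S k).
Proof.
  intros Ha Hirr k. destruct (cf_rem_range a Ha Hirr k) as [[Hk0 Hk1] _].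
  assert (Hinv : 1 < / cf_rem a k).
  { apply (Rmult_lt_reg_r (cf_rem a k)); [lra|]. rewrite Rinv_l; lra. }
  pose proof (base_fp (/ cf_rem a k)) as Hfrac. unfold frac_part in Hfrac.
  assert (Hint : (0 < Int_part (/ cf_rem a k))%Z) by (apply lt_IZR; simpl; lra).
  simpl pq. simpl cf_rem. rewrite INR_IZR_INZ, Z2Nat.id by lia.
  split; [lia|]. unfold frac_part. ring.
Qed.

Lemma s_1 a : s a 1 = wpow [false] (pq a 1 - 1) ++ [true].
Proof. reflexivity. Qed.

Lemma s_rec a m : s a (S (S m)) = wpow (s a (S m)) (pq a (S (S m))) ++ s a m.
Proof.
  assert (Hsp : sp a (S m) = (s a m, s a (S m))).
  { unfold s. simpl. destruct (sp a m). destruct m; reflexivity. }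
  unfold s at 1.
  change (sp a (S (S m)))
    with (let (p, c) := sp a (S m) in (c, wpow c (pq a (S (S m))) ++ p)).
  rewrite Hsp. reflexivity.
Qed.

Lemma s_length_pos a m : (1 <= length (s a m))%nat.
Proof.
  enough (H : (1 <= length (s a m))%nat /\ (1 <= length (s a (S m)))%nat) by apply H.
  induction m as [|m [IH1 IH2]].
  - rewrite s_1, length_app. simpl. lia.
  - rewrite s_rec, length_app. lia.
Qed.

Lemma s_swap_last2 a m : exists π x y,
  s a (S m) ++ s a m = π ++ [x; y] /\ s a m ++ s a (S m) = π ++ [y; x].
Proof.
  induction m as [|m [π [x [y [H1 H2]]]]].
  - exists (wpow [false] (pq a 1 - 1)), true, false. rewrite s_1. split.
    + rewrite <- app_assoc. reflexivity.
    + change (s a 0) with [false]. rewrite app_assoc, <- wpow_S, wpow_Sr, <- app_assoc.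
      reflexivity.
  - exists (wpow (s a (S m)) (pq a (S (S m))) ++ π), y, x. rewrite s_rec. split.
    + rewrite <- app_assoc, H2, app_assoc. reflexivity.
    + rewrite app_assoc, <- wpow_S, wpow_Sr, <- app_assoc, H1, app_assoc. reflexivity.
Qed.

Lemma s_firstn_swap a m e : (e < length (s a (S m)))%nat ->
  firstn e (s a (S m)) = firstn e (s a m ++ s a (S m)).
Proof.
  intros He. destruct (s_swap_last2 a m) as [π [x [y [H1 H2]]]].
  assert (Hπ : (e <= length π)%nat).
  { apply (f_equal (@length bool)) in H1. rewrite !length_app in H1.
    pose proof (s_length_pos a m). simpl in H1. lia. }
  rewrite <- (firstn_app_le (s a (S m)) (s a m) e (Nat.lt_le_incl _ _ He)), H1, H2,
    !firstn_app_le by exact Hπ.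
  reflexivity.
Qed.

Lemma s_rec_last a m : (1 <= pq a (S (S m)))%nat ->
  s a (S (S m)) = wpow (s a (S m)) (pq a (S (S m)) - 1) ++ s a (S m) ++ s a m.
Proof.
  intros Hpq. rewrite s_rec, app_assoc, <- wpow_Sr.
  replace (S (pq a (S (S m)) - 1)) with (pq a (S (S m))) by lia. reflexivity.
Qed.

Lemma subword_s_triple a m : 0 < a < 1 -> irrational a ->
  subword (s a (S m) ++ s a m ++ s a (S m)) (s a (S (S (S m)))).
Proof.
  intros Ha Hirr.
  rewrite (s_rec_last a (S m)) by apply (cf_rem_inv a Ha Hirr).
  rewrite (s_rec_last a m) at 2 by apply (cf_rem_inv a Ha Hirr).
  exists (wpow (s a (S (S m))) (pq a (S (S (S m))) - 1)
          ++ wpow (s a (S m)) (pq a (S (S m)) - 1)), [].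
  rewrite app_nil_r, <- !app_assoc. reflexivity.
Qed.

Definition slope (a : R) (k : nat) : R :=
  if Nat.even k then cf_rem a k else 1 - cf_rem a k.

Definition std_subst (a : R) (k : nat) : list bool * list bool :=
  if Nat.even k then (s a k, s a k ++ s a (k - 1)) else (s a k ++ s a (k - 1), s a k).

Lemma img_std_subst a k c :
  img (std_subst a k) c = s a k \/ img (std_subst a k) c = s a k ++ s a (k - 1).
Proof. unfold std_subst. destruct (Nat.even k), c; simpl; auto. Qed.

Theorem recodes_std_subst a : 0 < a < 1 -> irrational a ->
  forall k, (1 <= k)%nat -> recodes a (slope a k) (std_subst a k).
Proof.
  intros Ha Hirr k Hk. induction k as [|k IH]; [lia|].
  destruct (cf_rem_range a Ha Hirr (S k)) as [Hg' _].
  destruct (cf_rem_inv a Ha Hirr k) as [Hpq Hinv].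
  replace (pq a (S k)) with (S (pq a (S k) - 1)) in Hinv by lia.
  destruct k as [|k].
  - pose proof (recodes_L_then_R _ _ _ _ _ Hg' Hinv (recodes_id a)) as H.
    unfold slope, std_subst. change (Nat.even 1) with false. cbv iota.
    cbn [fst snd] in H. change (1 - 1)%nat with 0%nat.
    rewrite s_1, <- app_assoc. exact H.
  - specialize (IH ltac:(lia)). unfold slope, std_subst in *.
    rewrite Nat.even_succ, <- Nat.negb_even.
    replace (S (S k) - 1)%nat with (S k) by lia. replace (S k - 1)%nat with k in IH by lia.
    rewrite (s_rec_last a k Hpq).
    destruct (Nat.even (S k)); cbv iota in *; cbn [negb].
    + pose proof (recodes_L_then_R _ _ _ _ _ Hg' Hinv IH) as H.
      cbn [fst snd] in H. rewrite <- !app_assoc in *. exact H.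
    + pose proof (recodes_R_then_L _ _ _ _ _ Hg' Hinv IH) as H.
      cbn [fst snd] in H. rewrite <- !app_assoc in *. exact H.
Qed.

Lemma coding_factor_blocks a n x N : 0 < a < 1 -> irrational a -> (1 <= n)%nat -> 0 <= x < 1 ->
  exists B d L r, (B = s a n \/ B = s a n ++ s a (n - 1)) /\ (d < length B)%nat /\
    coding a x N ++ r = skipn d (B ++ s a n ++ L).
Proof.
  intros Ha Hirr Hn Hx.
  set (K := (length (s a n) + length (s a (n - 1)))%nat).
  destruct (recodes_std_subst a Ha Hirr n Hn x Hx (N + S K)%nat)
    as [y [d [M [r [_ [Hd H]]]]]].
  rewrite coding_app, <- app_assoc in H. set (r' := coding _ _ (S K) ++ r) in H.
  assert (HK : forall c, (length (img (std_subst a n) c) <= K)%nat)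
    by (intros c; unfold K; destruct (img_std_subst a n c) as [-> | ->]; rewrite ?length_app; lia).
  destruct M as [|[|M]].
  - change (subst _ (coding _ _ 0)) with (@nil bool) in H. rewrite skipn_nil in H.
    apply (f_equal (@length bool)) in H. unfold r' in H.
    rewrite !length_app in H. simpl in H. lia.
  - apply (f_equal (@length bool)) in H.
    unfold r' in H. rewrite !length_app, !coding_length, length_skipn in H.
    unfold subst in H. simpl in H. rewrite app_nil_r in H.
    specialize (HK (code (slope a n) y)). lia.
  - simpl coding in H. rewrite !subst_cons in H.
    set (rest := subst _ (coding _ _ M)) in H.
    exists (img (std_subst a n) (code (slope a n) y)), d.
    destruct (img_std_subst a n (code (slope a n) (rot (slope a n) y))) as [E | E];
      rewrite E in H; [exists rest | exists (s a (n - 1) ++ rest)]; exists r';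
      (split; [apply img_std_subst | split; [exact Hd|]]);
      [exact H | rewrite <- app_assoc in H; exact H].
Qed.

Lemma subword_s_coding0 a m : 0 < a < 1 -> irrational a -> (1 <= m)%nat ->
  exists N, subword (s a m) (coding a 0 N).
Proof.
  intros Ha Hirr Hm.
  set (N := (length (s a m) + (length (s a m) + length (s a (m - 1))))%nat).
  destruct (coding_factor_blocks a m 0 N Ha Hirr Hm ltac:(lra))
    as [B [d [L [r [HB [Hd H]]]]]].
  exists N. rewrite skipn_app, (proj2 (Nat.sub_0_le d (length B))) in H by lia.
  apply (subword_of_app_prefix _ _ _ _ _ (eq_sym H)).
  rewrite coding_length, length_skipn.
  destruct HB as [-> | ->]; unfold N; rewrite ?length_app; lia.
Qed.

Lemma inW_subword_s a u m : 0 < a < 1 -> irrational a -> (1 <= m)%nat -> u <> [] ->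
  subword u (s a m) -> inW a u.
Proof.
  intros Ha Hirr Hm Hu Hsub.
  destruct (subword_s_coding0 a m Ha Hirr Hm) as [N HN].
  apply (inW_subword_coding0 a u N Ha Hu). exact (subword_trans _ _ _ Hsub HN).
Qed.

Lemma short_factor_subword_s a w m : 0 < a < 1 -> irrational a -> inW a w ->
  (length w < length (s a (S m)))%nat -> subword w (s a (S (S (S m)))).
Proof.
  intros Ha Hirr Hw Hlen.
  destruct (inW_coding a w Ha Hw) as [x [Hx Ew]].
  destruct (coding_factor_blocks a (S m) x (length w) Ha Hirr ltac:(lia) Hx)
    as [B [d [L [r [HB [Hd H]]]]]].
  rewrite <- Ew in H. simpl Nat.sub in HB. rewrite Nat.sub_0_r in HB.
  apply (subword_trans _ (s a (S m) ++ s a m ++ s a (S m))); [|apply subword_s_triple; assumption].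
  apply (subword_of_common_prefix w r _ _ d (d + length w) H (le_n _)).
  destruct HB as [-> | ->].
  - rewrite (firstn_app _ _ (s a (S m) ++ L)), (firstn_app _ _ (s a m ++ s a (S m))).
    f_equal. rewrite (firstn_app_le (s a (S m)) L), s_firstn_swap by lia. reflexivity.
  - rewrite (app_assoc (s a (S m) ++ s a m)), firstn_app_le, <- app_assoc; [reflexivity|].
    rewrite !length_app in *. lia.
Qed.

Lemma s_factor_around a w m : 0 < a < 1 -> irrational a -> subword w (s a m) ->
  exists x y, inW a x /\ inW a y /\ x ++ w ++ y = s a (S (S (S m))) /\
    (length (s a (S m)) <= length x)%nat /\ (length (s a (S m)) <= length y)%nat.
Proof.
  intros Ha Hirr [p [q Hw]].
  destruct (cf_rem_inv a Ha Hirr (S (S m))) as [Hc _].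
  set (x := wpow (s a (S m)) (pq a (S (S m)) - 1) ++ s a (S m) ++ p).
  set (y := q ++ wpow (s a (S (S m))) (pq a (S (S (S m))) - 1) ++ s a (S m)).
  assert (Hs : x ++ w ++ y = s a (S (S (S m)))).
  { unfold x, y. rewrite (s_rec a (S m)), <- !app_assoc, (app_assoc w q), (app_assoc p), Hw.
    rewrite (app_assoc (s a (S m))), app_assoc, <- (s_rec_last a m)
      by apply (cf_rem_inv a Ha Hirr).
    rewrite app_assoc, <- wpow_S. do 3 f_equal. lia. }
  assert (Hx : (length (s a (S m)) <= length x)%nat) by (unfold x; rewrite !length_app; lia).
  assert (Hy : (length (s a (S m)) <= length y)%nat) by (unfold y; rewrite !length_app; lia).
  pose proof (s_length_pos a (S m)) as Hpos.
  exists x, y. split; [|split; [|split; [exact Hs | split; assumption]]].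
  - apply (inW_subword_s a x (S (S (S m))) Ha Hirr ltac:(lia)).
    + intros Hnil. rewrite Hnil in Hx. simpl in Hx. lia.
    + exists [], (w ++ y). exact Hs.
  - apply (inW_subword_s a y (S (S (S m))) Ha Hirr ltac:(lia)).
    + intros Hnil. rewrite Hnil in Hy. simpl in Hy. lia.
    + exists (x ++ w), []. rewrite app_nil_r, <- app_assoc. exact Hs.
Qed.

Theorem proposition5 (alpha : R) (Ha : 0 < alpha < 1) (Hirr : irrational alpha) :
  (forall (w : list bool) (n : nat), inW alpha w -> (2 <= n)%nat ->
     (length w < length (s alpha n))%nat -> subword w (s alpha (n + 2))) /\
  (forall (w : list bool) (n : nat), (1 <= n)%nat -> inW alpha w ->
     subword w (s alpha n) ->
     exists x y : list bool, inW alpha x /\ inW alpha y /\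
       x ++ w ++ y = s alpha (n + 3) /\
       (length (s alpha (n + 1)) <= length x)%nat /\
       (length (s alpha (n + 1)) <= length y)%nat).
Proof.
  split.
  - intros w [|m] Hw Hn Hlen; [lia|].
    replace (S m + 2)%nat with (S (S (S m))) by lia.
    exact (short_factor_subword_s alpha w m Ha Hirr Hw Hlen).
  - intros w n _ _ Hsub.
    replace (n + 3)%nat with (S (S (S n))) by lia. replace (n + 1)%nat with (S n) by lia.
    exact (s_factor_around alpha w n Ha Hirr Hsub).
Qed.
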